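(* Let $\Lambda=(\Lambda_\nu)_{\nu=1}^d$ with $\Lambda_\nu\subset\mathbb{Z}_+^n$ finite nonempty, $P\in\mathcal{P}_\Lambda$, $S\subset N_n$, and let $\mathbb{F}=(\mathbb{F}_\nu)$ be a $d$-tuple with $\mathbb{F}_\nu$ a face of ${\bf N}(\Lambda_\nu,S)$. Suppose $\sup_{r\in I(S),\xi\in\mathbb{R}^d}|\mathcal{I}(P,\xi,r)|<\infty$, and suppose there is $u=(u_j)\in\bigcap_{\nu=1}^d(\mathbb{F}_\nu^* )^\circ$ with $u_j=0$ for $j\in S_0$ and $u_j>0$ for $j\in S\setminus S_0$, where $S_0\subset S$. Then $$\sup\big\{|\mathcal{I}(P_{\mathbb{F}},\xi,a,b)|:\xi\in\mathbb{R}^d,\ a,b\in I(S_0),\ a_j<b_j\ \forall j\big\}<\infty.$$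
   Context: $P=(P_\nu)$, $P_\nu(t)=\sum_{\mathfrak m\in\Lambda_\nu}c^\nu_{\mathfrak m}t^{\mathfrak m}$ with nonzero real coefficients ($\mathcal{P}_\Lambda$ is the set of such). For $T\subset N_n=\{1,\dots,n\}$, $I(T)=\prod_jI_j$ with $I_j=(0,1)$ for $j\in T$ and $I_j=(0,\infty)$ otherwise. $\mathcal{I}(P,\xi,r)=\lim_{\epsilon\to0}\int_{\prod_j\{\epsilon_j<|t_j|<r_j\}}e^{i\langle\xi,P(t)\rangle}\frac{dt_1}{t_1}\cdots\frac{dt_n}{t_n}$. $\mathcal{I}(P_{\mathbb{F}},\xi,a,b)=\int_{\prod_j\{a_j<|t_j|<b_j\}}\exp\big(i\sum_\nu\xi_\nu\sum_{\mathfrak m\in\mathbb{F}_\nu\cap\Lambda_\nu}c^\nu_{\mathfrak m}t^{\mathfrak m}\big)\frac{dt_1}{t_1}\cdots\frac{dt_n}{t_n}$. $\mathbb{R}_+^S=\{u:u_j\ge0\ (j\in S),u_j=0\ (j\notin S)\}$, $Z(S)=\{u:u_j\ge0\ \forall j\in S\}$, ${\bf N}(\Omega,S)=$ convex hull of $\Omega+\mathbb{R}_+^S$. Face: $\mathbb{F}\subset\mathbb{P}$ with $\mathbb{F}=\emptyset$ or $\exists\mathfrak q,r$: $\langle\mathfrak q,\cdot\rangle=r$ on $\mathbb{F}$, $>r$ on $\mathbb{P}\setminus\mathbb{F}$. For nonempty face, $(\mathbb{F}^* )^\circ=\{\mathfrak q\ne0:\exists r,\langle\mathfrak q,x\rangle=r\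 (x\in\mathbb{F}),\langle\mathfrak q,y\rangle>r\ (y\in\mathbb{P}\setminus\mathbb{F})\}$ relative to $\mathbb{P}={\bf N}(\Lambda_\nu,S)$; for the empty face, $(\mathbb{F}^* )^\circ=Z(S)\setminus\{0\}$. *)

From Stdlib Require Import Reals List Classical ClassicalEpsilon.
Import ListNotations.
Open Scope R_scope.

(* Conventions: coordinates are 0-indexed, j = 0..n-1 stands for 1..n.
   Vectors in R^n are functions nat -> R (only coordinates j < n matter for
   inner products; points of Newton polyhedra have zero coordinates j >= n).
   Multi-indices in Z_+^n are lists of nat of length n. *)

Fixpoint rsum (k : nat) (f : nat -> R) : R :=
  match k with O => 0 | S k' => rsum k' f + f k' end.

Fixpoint rprod (k : nat) (f : nat -> R) : R :=
  match k with O => 1 | S k' => rprod k' f * f k' end.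

Definition ip (n : nat) (q x : nat -> R) : R := rsum n (fun j => q j * x j).

Definition embed (m : list nat) : nat -> R := fun j => INR (nth j m O).

Definition mono (m : list nat) (t : nat -> R) : R :=
  rprod (length m) (fun j => t j ^ (nth j m O)).

Definition mpoly := list (list nat * R).

Definition supp (p : mpoly) : list (list nat) := map fst p.

(* P_nu in P_Lambda with Lambda_nu = supp (P nu): distinct multi-indices of
   length n, nonzero coefficients, nonempty support. *)
Definition WFpoly (n : nat) (p : mpoly) : Prop :=
  p <> [] /\ NoDup (supp p) /\
  Forall (fun mc => length (fst mc) = n /\ snd mc <> 0) p.

Definition evalP (p : mpoly) (t : nat -> R) : R :=
  fold_right (fun mc acc => snd mc * mono (fst mc) t + acc) 0 p.

Definition evalPF (F : (nat -> R) -> Prop) (p : mpoly) (t : nat -> R) : R :=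
  fold_right (fun mc acc =>
     (if excluded_middle_informative (F (embed (fst mc)))
      then snd mc * mono (fst mc) t else 0) + acc) 0 p.

Definition phaseP (d : nat) (P : nat -> mpoly) (xi : nat -> R) (t : nat -> R) : R :=
  rsum d (fun nu => xi nu * evalP (P nu) t).

Definition phasePF (d : nat) (P : nat -> mpoly) (F : nat -> (nat -> R) -> Prop)
  (xi : nat -> R) (t : nat -> R) : R :=
  rsum d (fun nu => xi nu * evalPF (F nu) (P nu) t).

Definition upd (t : nat -> R) (k : nat) (x : R) : nat -> R :=
  fun j => if Nat.eqb j k then x else t j.

(* iint k lo hi f v : v is the (iterated Riemann) integral of f over
   prod_{j<k} { lo_j < |t_j| < hi_j }. *)
Fixpoint iint (k : nat) (lo hi : nat -> R) (f : (nat -> R) -> R) (v : R) : Prop :=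
  match k with
  | O => v = f (fun _ => 0)
  | S k' =>
      exists g : R -> R,
        (forall x, lo k' < Rabs x < hi k' ->
            iint k' lo hi (fun t => f (upd t k' x)) (g x)) /\
        exists (pr1 : Riemann_integrable g (- hi k') (- lo k'))
               (pr2 : Riemann_integrable g (lo k') (hi k')),
          v = RiemannInt pr1 + RiemannInt pr2
  end.

(* complex numbers as pairs (Re, Im) *)
Definition cmod (z : R * R) : R := sqrt (fst z ^ 2 + snd z ^ 2).
Definition cdist (z w : R * R) : R := cmod (fst z - fst w, snd z - snd w).

(* z = int_{prod_j {lo_j<|t_j|<hi_j}} e^{i phase(t)} dt_1/t_1 ... dt_n/t_n *)
Definition cint (n : nat) (lo hi : nat -> R) (phase : (nat -> R) -> R) (z : R * R) : Prop :=
  iint n lo hi (fun t => cos (phase t) / rprod n t) (fst z) /\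
  iint n lo hi (fun t => sin (phase t) / rprod n t) (snd z).

Definition Ilim (n : nat) (phase : (nat -> R) -> R) (r : nat -> R) (L : R * R) : Prop :=
  forall delta, 0 < delta -> exists eta, 0 < eta /\
    forall eps : nat -> R, (forall j, (j < n)%nat -> 0 < eps j < eta) ->
      (exists z, cint n eps r phase z) /\
      (forall z, cint n eps r phase z -> cdist z L < delta).

Definition inI (n : nat) (T : nat -> Prop) (r : nat -> R) : Prop :=
  forall j, (j < n)%nat -> 0 < r j /\ (T j -> r j < 1).

Definition RplusS (S : nat -> Prop) (u : nat -> R) : Prop :=
  forall j, (S j -> 0 <= u j) /\ (~ S j -> u j = 0).

Definition conv (A : (nat -> R) -> Prop) (x : nat -> R) : Prop :=
  exists (pts : list (nat -> R)) (lams : list R),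
    Forall A pts /\ length lams = length pts /\ Forall (Rle 0) lams /\
    fold_right Rplus 0 lams = 1 /\
    forall j, x j = fold_right Rplus 0
                      (map (fun p => fst p * snd p j) (combine lams pts)).

Definition Newton (Om : list (list nat)) (S : nat -> Prop) : (nat -> R) -> Prop :=
  conv (fun y => exists m u, In m Om /\ RplusS S u /\ forall j, y j = embed m j + u j).

Definition is_face (n : nat) (PP F : (nat -> R) -> Prop) : Prop :=
  (forall x, F x -> PP x) /\
  ((forall x, ~ F x) \/
   exists (q : nat -> R) (r : R),
     (forall x, F x -> ip n q x = r) /\
     (forall y, PP y -> ~ F y -> ip n q y > r)).

Definition dual_int (n : nat) (S : nat -> Prop) (PP F : (nat -> R) -> Prop)
  (q : nat -> R) : Prop :=
  (exists j, (j < n)%nat /\ q j <> 0) /\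
  ((exists x, F x) ->
     exists r, (forall x, F x -> ip n q x = r) /\
               (forall y, PP y -> ~ F y -> ip n q y > r)) /\
  ((forall x, ~ F x) -> forall j, (j < n)%nat -> S j -> 0 <= q j).

From Stdlib Require Import Reals List Classical ClassicalEpsilon Lra Lia FunctionalExtensionality.
From Coquelicot Require Import Coquelicot.
Open Scope R_scope.

(* Idea: pick the weight [u] of the statement and, for small [dl > 0], rescale
   t_j = dl^{u_j} s_j.  Every monomial of [P_nu] lying in the face [F_nu] has
   weighted degree [r_nu] (the level of the supporting hyperplane of normal [u]),
   the other monomials have degree > [r_nu]; hence with the frequency
   [xi_nu dl^{-r_nu}] the phase of [P] in the rescaled variables converges
   uniformly on bounded sets to the phase of the truncation [P_F].  Since
   [u_j = 0] on [S0] and [u_j > 0] on [S \ S0], the rescaled box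
   [dl^u a < |t| < dl^u b] has both corners in [I(S)] for small [dl].

   The
   theorem follows with the box bound plus 1 as uniform bound. *)

Lemma rsum_ext k f g : (forall j, (j < k)%nat -> f j = g j) -> rsum k f = rsum k g.
Proof.
  induction k; simpl; intros H; auto.
  rewrite IHk by (intros; apply H; lia). rewrite H by lia; auto.
Qed.

Lemma rprod_ext k f g : (forall j, (j < k)%nat -> f j = g j) -> rprod k f = rprod k g.
Proof.
  induction k; simpl; intros H; auto.
  rewrite IHk by (intros; apply H; lia). rewrite H by lia; auto.
Qed.

Lemma rsum_le k f g : (forall j, (j < k)%nat -> f j <= g j) -> rsum k f <= rsum k g.
Proof.
  induction k; simpl; intros H. lra.
  assert (rsum k f <= rsum k g) by (apply IHk; intros; apply H; lia).
  assert (f k <= g k) by (apply H; lia). lra.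
Qed.

Lemma rsum_const k c : rsum k (fun _ => c) = INR k * c.
Proof. induction k; simpl rsum. simpl; ring. rewrite IHk, S_INR. ring. Qed.

Lemma rsum_nonneg k f : (forall j, (j < k)%nat -> 0 <= f j) -> 0 <= rsum k f.
Proof.
  intros H. rewrite <- (Rmult_0_r (INR k)), <- rsum_const. apply rsum_le. exact H.
Qed.

Lemma rsum_term k f j : (forall i, (i < k)%nat -> 0 <= f i) -> (j < k)%nat -> f j <= rsum k f.
Proof.
  induction k; intros H Hj; [lia|]. simpl.
  destruct (Nat.eq_dec j k) as [->|Hne].
  - assert (0 <= rsum k f) by (apply rsum_nonneg; intros; apply H; lia). lra.
  - assert (f j <= rsum k f) by (apply IHk; [intros; apply H; lia| lia]).
    assert (0 <= f k) by (apply H; lia). lra.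
Qed.

Lemma rsum_minus k f g : rsum k (fun j => f j - g j) = rsum k f - rsum k g.
Proof. induction k; simpl. ring. rewrite IHk; ring. Qed.

Lemma rsum_abs k f : Rabs (rsum k f) <= rsum k (fun j => Rabs (f j)).
Proof.
  induction k; simpl. rewrite Rabs_R0; lra.
  eapply Rle_trans. apply Rabs_triang. lra.
Qed.

Lemma rprod_nonneg k f : (forall j, (j < k)%nat -> 0 <= f j) -> 0 <= rprod k f.
Proof.
  induction k; simpl; intros H. lra.
  apply Rmult_le_pos. apply IHk; intros; apply H; lia. apply H; lia.
Qed.

Lemma rprod_pos k f : (forall j, (j < k)%nat -> 0 < f j) -> 0 < rprod k f.
Proof.
  induction k; simpl; intros H. lra.
  apply Rmult_lt_0_compat. apply IHk; intros; apply H; lia. apply H; lia.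
Qed.

Lemma rprod_le k f g : (forall j, (j < k)%nat -> 0 <= f j <= g j) -> rprod k f <= rprod k g.
Proof.
  induction k; simpl; intros H. lra.
  apply Rmult_le_compat. apply rprod_nonneg; intros; apply H; lia. apply H; lia.
  apply IHk; intros; apply H; lia. apply H; lia.
Qed.

Lemma rprod_mult k f g : rprod k (fun j => f j * g j) = rprod k f * rprod k g.
Proof. induction k; simpl. ring. rewrite IHk; ring. Qed.

Lemma rprod_abs k t : Rabs (rprod k t) = rprod k (fun j => Rabs (t j)).
Proof. induction k; simpl. apply Rabs_R1. rewrite Rabs_mult, IHk; auto. Qed.

Lemma upd_same (t : nat -> R) k x : upd t k x k = x.
Proof. unfold upd; rewrite Nat.eqb_refl; auto. Qed.

Lemma upd_other (t : nat -> R) k x j : j <> k -> upd t k x j = t j.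
Proof. intros; unfold upd; destruct (Nat.eqb_spec j k); [lia|auto]. Qed.

Lemma iint_S k lo hi f v : iint (S k) lo hi f v <->
  exists g : R -> R,
    (forall x, lo k < Rabs x < hi k -> iint k lo hi (fun t => f (upd t k x)) (g x)) /\
    ex_RInt g (- hi k) (- lo k) /\ ex_RInt g (lo k) (hi k) /\
    v = RInt g (- hi k) (- lo k) + RInt g (lo k) (hi k).
Proof.
  simpl; split.
  - intros [g [Hg [p1 [p2 ->]]]]. exists g; repeat split; auto.
    + apply ex_RInt_Reals_1; exact p1.
    + apply ex_RInt_Reals_1; exact p2.
    + rewrite <- !RInt_Reals; reflexivity.
  - intros [g [Hg [e1 [e2 ->]]]]. exists g; split; auto.
    exists (ex_RInt_Reals_0 _ _ _ e1), (ex_RInt_Reals_0 _ _ _ e2).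
    rewrite <- !RInt_Reals; reflexivity.
Qed.

Lemma iint_ext_bounds k : forall lo hi lo' hi' f v,
  (forall j, (j < k)%nat -> lo j = lo' j /\ hi j = hi' j) ->
  iint k lo hi f v -> iint k lo' hi' f v.
Proof.
  induction k as [|k IH]; intros lo hi lo' hi' f v Hj Hv; [exact Hv|].
  apply iint_S in Hv; apply iint_S.
  destruct (Hj k (Nat.lt_succ_diag_r k)) as [E1 E2].
  destruct Hv as [g [Hg [e1 [e2 ->]]]]. exists g.
  rewrite <- E1, <- E2. repeat split; auto.
  intros x Hx. eapply IH; [|apply Hg, Hx]. intros; apply Hj; lia.
Qed.

Definition inbox k lo hi (t : nat -> R) :=
  (forall j, (j < k)%nat -> lo j < Rabs (t j) < hi j) /\ (forall j, (k <= j)%nat -> t j = 0).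
Definition vol k (lo hi : nat -> R) := rprod k (fun j => 2 * (hi j - lo j)).

Lemma inbox_upd k lo hi t x : inbox k lo hi t -> lo k < Rabs x < hi k ->
  inbox (S k) lo hi (upd t k x).
Proof.
  intros [H1 H2] Hx; split; intros j Hj; unfold upd.
  - destruct (Nat.eqb_spec j k). subst; auto. apply H1; lia.
  - destruct (Nat.eqb_spec j k). lia. apply H2; lia.
Qed.

Lemma vol_nonneg k lo hi : (forall j, (j < k)%nat -> lo j <= hi j) -> 0 <= vol k lo hi.
Proof. intros H. apply rprod_nonneg. intros j Hj. specialize (H j Hj). lra. Qed.

Lemma RInt_close (g1 g2 : R -> R) a b E : a <= b -> ex_RInt g1 a b -> ex_RInt g2 a b ->
  (forall x, a < x < b -> Rabs (g1 x - g2 x) <= E) ->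
  Rabs (RInt g1 a b - RInt g2 a b) <= (b - a) * E.
Proof.
  intros Hab e1 e2 H.
  assert (ec : ex_RInt (fun _ : R => E) a b) by apply ex_RInt_const.
  assert (Hp : RInt (fun x => g2 x + E) a b = RInt g2 a b + (b - a) * E).
  { change (fun x => g2 x + E) with (fun x => plus (g2 x) ((fun _ : R => E) x)).
    rewrite (@RInt_plus R_CompleteNormedModule g2 (fun _ => E)), RInt_const; auto. }
  assert (Hm : RInt (fun x => g2 x - E) a b = RInt g2 a b - (b - a) * E).
  { change (fun x => g2 x - E) with (fun x => minus (g2 x) ((fun _ : R => E) x)).
    rewrite (@RInt_minus R_CompleteNormedModule g2 (fun _ => E)), RInt_const; auto. }
  assert (H1 : RInt g1 a b <= RInt (fun x => g2 x + E) a b).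
  { apply RInt_le; auto. apply (ex_RInt_plus g2 (fun _ => E)); auto.
    intros x Hx. specialize (H x Hx). apply Rabs_le_between in H. lra. }
  assert (H2 : RInt (fun x => g2 x - E) a b <= RInt g1 a b).
  { apply RInt_le; auto. apply (ex_RInt_minus g2 (fun _ => E)); auto.
    intros x Hx. specialize (H x Hx). apply Rabs_le_between in H. lra. }
  rewrite Hp in H1; rewrite Hm in H2. apply Rabs_le. lra.
Qed.

Lemma iint_approx k : forall lo hi f g v w e,
  (forall j, (j < k)%nat -> 0 <= lo j <= hi j) ->
  (forall t, inbox k lo hi t -> Rabs (f t - g t) <= e) ->
  iint k lo hi f v -> iint k lo hi g w -> Rabs (v - w) <= e * vol k lo hi.
Proof.
  induction k as [|k IH]; intros lo hi f g v w e Hl Hfg Hv Hw.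
  - simpl in Hv, Hw. subst. unfold vol; simpl. rewrite Rmult_1_r.
    apply Hfg. split; intros; [lia | reflexivity].
  - apply iint_S in Hv. apply iint_S in Hw.
    destruct Hv as [g1 [Hg1 [e11 [e12 ->]]]]. destruct Hw as [g2 [Hg2 [e21 [e22 ->]]]].
    assert (Hk := Hl k (Nat.lt_succ_diag_r k)).
    set (E := e * vol k lo hi).
    assert (Hin : forall x, lo k < Rabs x < hi k -> Rabs (g1 x - g2 x) <= E).
    { intros x Hx. eapply IH; [intros; apply Hl; lia | | apply Hg1, Hx | apply Hg2, Hx].
      intros t Ht. apply Hfg. apply inbox_upd; auto. }
    assert (A1 : Rabs (RInt g1 (- hi k) (- lo k) - RInt g2 (- hi k) (- lo k))
                 <= (- lo k - - hi k) * E).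
    { apply RInt_close; auto. lra.
      intros x Hx. apply Hin. rewrite Rabs_left; lra. }
    assert (A2 : Rabs (RInt g1 (lo k) (hi k) - RInt g2 (lo k) (hi k)) <= (hi k - lo k) * E).
    { apply RInt_close; auto. lra.
      intros x Hx. apply Hin. rewrite Rabs_right; lra. }
    unfold vol; simpl; fold (vol k lo hi).
    replace (e * (vol k lo hi * (2 * (hi k - lo k))))
      with ((- lo k - - hi k) * E + (hi k - lo k) * E) by (unfold E; ring).
    eapply Rle_trans; [|apply Rplus_le_compat; [exact A1 | exact A2]].
    eapply Rle_trans; [|apply Rabs_triang]. right; f_equal; ring.
Qed.

Definition cmul (c t : nat -> R) : nat -> R := fun j => c j * t j.

Lemma cmul_upd c t k x : cmul c (upd t k x) = upd (cmul c t) k (c k * x).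
Proof.
  apply functional_extensionality; intro j; unfold cmul, upd.
  destruct (Nat.eqb_spec j k); subst; reflexivity.
Qed.

Lemma RInt_dilate (g : R -> R) c lam a b : ex_RInt g (c * a) (c * b) ->
  ex_RInt (fun y => lam * c * g (c * y)) a b /\
  RInt (fun y => lam * c * g (c * y)) a b = lam * RInt g (c * a) (c * b).
Proof.
  intros Hab.
  assert (Hl := ex_RInt_comp_lin g c 0 a b).
  assert (Hr := RInt_comp_lin g c 0 a b).
  rewrite !Rplus_0_r in Hl, Hr. specialize (Hl Hab). specialize (Hr Hab).
  assert (EQ : forall y, scal lam (scal c (g (c * y + 0))) = lam * c * g (c * y)).
  { intro y. rewrite Rplus_0_r. unfold scal; simpl; unfold mult; simpl. ring. }
  split.
  - eapply ex_RInt_ext; [|exact (ex_RInt_scal _ _ _ lam Hl)]. intros; apply EQ.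
  - rewrite <- Hr, <- (RInt_ext _ _ _ _ (fun y _ => EQ y)). exact (RInt_scal _ _ _ lam Hl).
Qed.

Lemma iint_scale k : forall (c lo hi : nat -> R) f v lam,
  (forall j, (j < k)%nat -> 0 < c j) ->
  iint k (cmul c lo) (cmul c hi) f v ->
  iint k lo hi (fun s => lam * rprod k c * f (cmul c s)) (lam * v).
Proof.
  induction k as [|k IH]; intros c lo hi f v lam Hc Hv.
  - simpl in *. subst. rewrite Rmult_1_r. do 2 f_equal.
    apply functional_extensionality; intro j; unfold cmul; ring.
  - apply iint_S in Hv; apply iint_S.
    destruct Hv as [g [Hg [e1 [e2 ->]]]].
    assert (ck : 0 < c k) by (apply Hc; lia).
    exists (fun y => lam * c k * g (c k * y)).
    unfold cmul in e1, e2.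
    replace (- (c k * hi k)) with (c k * - hi k) in e1 by ring.
    replace (- (c k * lo k)) with (c k * - lo k) in e1 by ring.
    destruct (RInt_dilate g (c k) lam _ _ e1) as [f1 r1].
    destruct (RInt_dilate g (c k) lam _ _ e2) as [f2 r2].
    repeat split; auto.
    + intros x Hx.
      assert (Hx' : c k * lo k < Rabs (c k * x) < c k * hi k).
      { rewrite Rabs_mult, (Rabs_right (c k)) by lra.
        split; apply Rmult_lt_compat_l; lra. }
      specialize (IH c lo hi _ _ (lam * c k) ltac:(intros; apply Hc; lia) (Hg _ Hx')).
      replace (fun s => lam * rprod (S k) c * f (cmul c (upd s k x)))
        with (fun s => lam * c k * rprod k c * f (upd (cmul c s) k (c k * x))); [exact IH|].
      apply functional_extensionality; intro s. rewrite cmul_upd. simpl. ring.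
    + rewrite r1, r2. unfold cmul.
      replace (c k * - hi k) with (- (c k * hi k)) by ring.
      replace (c k * - lo k) with (- (c k * lo k)) by ring. ring.
Qed.

(* This class contains all integrands of the theorem and is stable under the
   operations used to build them. *)
Definition cbox k lo hi (t : nat -> R) :=
  (forall j, (j < k)%nat -> lo j <= Rabs (t j) <= hi j) /\ (forall j, (k <= j)%nat -> t j = 0).
Definition distk k (t t' : nat -> R) := rsum k (fun j => Rabs (t j - t' j)).
Definition blip k lo hi (f : (nat -> R) -> R) := exists L B, 0 <= L /\
  forall t t', cbox k lo hi t -> cbox k lo hi t' ->
    Rabs (f t) <= B /\ Rabs (f t - f t') <= L * distk k t t'.

Lemma distk_nonneg k t t' : 0 <= distk k t t'.
Proof. apply rsum_nonneg; intros; apply Rabs_pos. Qed.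

Lemma distk_upd k t t' x y : distk (S k) (upd t k x) (upd t' k y) = distk k t t' + Rabs (x - y).
Proof.
  unfold distk; simpl. rewrite !upd_same. f_equal.
  apply rsum_ext. intros j Hj. rewrite !upd_other by lia. reflexivity.
Qed.

Lemma distk_refl k t : distk k t t = 0.
Proof.
  unfold distk. rewrite (rsum_ext k _ (fun _ => 0)), rsum_const; [ring|].
  intros; unfold Rminus; rewrite Rplus_opp_r, Rabs_R0; auto.
Qed.

Lemma cbox_upd k lo hi t x : cbox k lo hi t -> lo k <= Rabs x <= hi k ->
  cbox (S k) lo hi (upd t k x).
Proof.
  intros [H1 H2] Hx; split; intros j Hj; unfold upd.
  - destruct (Nat.eqb_spec j k). subst; auto. apply H1; lia.
  - destruct (Nat.eqb_spec j k). lia. apply H2; lia.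
Qed.

Lemma blip_inner k lo hi f x : blip (S k) lo hi f -> lo k <= Rabs x <= hi k ->
  blip k lo hi (fun t => f (upd t k x)).
Proof.
  intros [L [B [HL H]]] Hx. exists L, B; split; auto. intros t t' Ht Ht'.
  destruct (H _ _ (cbox_upd _ _ _ _ _ Ht Hx) (cbox_upd _ _ _ _ _ Ht' Hx)) as [Hb Hd].
  rewrite distk_upd, Rminus_diag, Rabs_R0, Rplus_0_r in Hd. auto.
Qed.

Definition clampS (lo hi x : R) : R :=
  if Rle_dec 0 x then Rmax lo (Rmin hi x) else - Rmax lo (Rmin hi (- x)).

Lemma clampS_box lo hi x : 0 < lo <= hi -> lo <= Rabs (clampS lo hi x) <= hi.
Proof.
  intros H. unfold clampS. destruct (Rle_dec 0 x); [|rewrite Rabs_Ropp];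
  unfold Rmax, Rmin; repeat destruct Rle_dec; rewrite Rabs_right; lra.
Qed.

Lemma clampS_id lo hi x : 0 < lo -> lo < Rabs x < hi -> clampS lo hi x = x.
Proof.
  intros H Hx. unfold clampS. destruct (Rle_dec 0 x).
  - rewrite Rabs_right in Hx by lra. unfold Rmax, Rmin; repeat destruct Rle_dec; lra.
  - rewrite Rabs_left in Hx by lra. unfold Rmax, Rmin; repeat destruct Rle_dec; lra.
Qed.

Lemma clampS_lip lo hi x y : 0 < lo -> (0 <= x /\ 0 <= y \/ x < 0 /\ y < 0) ->
  Rabs (clampS lo hi x - clampS lo hi y) <= Rabs (x - y).
Proof.
  intros H [[Hx Hy]|[Hx Hy]]; unfold clampS;
  repeat destruct Rle_dec; try lra;
  unfold Rmax, Rmin; repeat destruct Rle_dec; apply Rabs_le; split;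
  (destruct (Rle_dec 0 (x - y));
   [rewrite (Rabs_right (x - y)) by lra | rewrite (Rabs_left (x - y)) by lra]); lra.
Qed.

Lemma cont_lip (G : R -> R) z K : z <> 0 -> 0 <= K ->
  (forall x, Rabs (x - z) < Rabs z -> Rabs (G x - G z) <= K * Rabs (x - z)) -> continuous G z.
Proof.
  intros Hz HK H. apply continuity_pt_filterlim.
  intros eps Heps.
  assert (Hz' : 0 < Rabs z) by (apply Rabs_pos_lt; auto).
  exists (Rmin (Rabs z) (eps / (K + 1))). split.
  - apply Rmin_pos; auto. apply Rdiv_lt_0_compat; lra.
  - intros x [_ Hx]. unfold R_dist in *. simpl in *. unfold R_dist in *.
    assert (H1 : Rabs (x - z) < Rabs z) by (eapply Rlt_le_trans; [exact Hx| apply Rmin_l]).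
    assert (H2 : Rabs (x - z) < eps / (K + 1)) by (eapply Rlt_le_trans; [exact Hx| apply Rmin_r]).
    eapply Rle_lt_trans. apply H; auto.
    apply Rle_lt_trans with (K * (eps / (K + 1))).
    { apply Rmult_le_compat_l; lra. }
    replace (K * (eps / (K + 1))) with (eps - eps / (K + 1)) by (field; lra).
    assert (0 < eps / (K + 1)) by (apply Rdiv_lt_0_compat; lra). lra.
Qed.

(* Existence of the iterated integral of a bounded Lipschitz function: the
   inner integral, as a function of the last variable, is Lipschitz (by
   [iint_approx]) after composing with [clampS], hence continuous away from 0
   and Riemann integrable on both half-shells. *)
Lemma iint_exists k : forall lo hi f, (forall j, (j < k)%nat -> 0 < lo j <= hi j) ->
  blip k lo hi f -> exists v, iint k lo hi f v.
Proof.
  induction k as [|k IH]; intros lo hi f Hl Hf.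
  { exists (f (fun _ => 0)). reflexivity. }
  assert (Hk := Hl k (Nat.lt_succ_diag_r k)).
  assert (Hl' : forall j, (j < k)%nat -> 0 < lo j <= hi j) by (intros; apply Hl; lia).
  set (cl := clampS (lo k) (hi k)).
  assert (Ex : forall x, exists v, iint k lo hi (fun t => f (upd t k (cl x))) v).
  { intro x. apply IH; auto. apply blip_inner; auto. apply clampS_box; lra. }
  set (G := fun x => proj1_sig (constructive_indefinite_description _ (Ex x))).
  assert (HG : forall x, iint k lo hi (fun t => f (upd t k (cl x))) (G x)).
  { intro x. unfold G. destruct constructive_indefinite_description; auto. }
  destruct Hf as [L [B [HL Hf]]].
  assert (Vn : 0 <= vol k lo hi) by (apply vol_nonneg; intros j Hj; specialize (Hl' j Hj); lra).
  assert (Lip : forall x y, Rabs (G x - G y) <= L * Rabs (cl x - cl y) * vol k lo hi).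
  { intros x y. eapply (iint_approx k lo hi); [| | apply (HG x) | apply (HG y)].
    { intros j Hj; specialize (Hl' j Hj); lra. }
    intros t [Ht1 Ht2]. assert (Ht : cbox k lo hi t).
    { split; auto. intros j Hj; specialize (Ht1 j Hj); lra. }
    eapply Rle_trans. apply Hf; apply cbox_upd; auto; apply clampS_box; lra.
    rewrite distk_upd, distk_refl, Rplus_0_l. lra. }
  assert (Cont : forall z, z <> 0 -> continuous G z).
  { intros z Hz. apply cont_lip with (L * vol k lo hi); auto. apply Rmult_le_pos; auto.
    intros x Hx. eapply Rle_trans. apply Lip.
    rewrite Rmult_assoc, (Rmult_comm (Rabs _)), <- Rmult_assoc.
    apply Rmult_le_compat_l. apply Rmult_le_pos; auto.
    apply clampS_lip. lra.
    destruct (Rle_dec 0 z).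
    - left. rewrite (Rabs_right z) in Hx by lra. apply Rabs_def2 in Hx. split; lra.
    - right. rewrite (Rabs_left z) in Hx by lra. apply Rabs_def2 in Hx. split; lra. }
  exists (RInt G (- hi k) (- lo k) + RInt G (lo k) (hi k)).
  apply iint_S. exists G. repeat split; auto.
  - intros x Hx. pose proof (HG x) as Hx'. unfold cl in Hx'.
    rewrite clampS_id in Hx' by lra. exact Hx'.
  - apply (@ex_RInt_continuous R_CompleteNormedModule). intros z Hz. apply Cont.
    rewrite Rmin_left, Rmax_right in Hz by lra. lra.
  - apply (@ex_RInt_continuous R_CompleteNormedModule). intros z Hz. apply Cont.
    rewrite Rmin_left, Rmax_right in Hz by lra. lra.
Qed.

Lemma RInt_piece (g g1 : R -> R) a b : a <= b -> (forall x, a < x < b -> g1 x = g x) ->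
  ex_RInt g1 a b -> ex_RInt g a b /\ RInt g a b = RInt g1 a b.
Proof.
  intros Hab H e.
  split. eapply ex_RInt_ext; [|exact e]. rewrite Rmin_left, Rmax_right by auto. exact H.
  symmetry. apply RInt_ext. rewrite Rmin_left, Rmax_right by auto. exact H.
Qed.

Lemma iint_split k : forall lo hi f m cc v1 v2, (m < k)%nat ->
  (forall j, (j < k)%nat -> 0 < lo j <= hi j) -> lo m < cc < hi m -> blip k lo hi f ->
  iint k lo (upd hi m cc) f v1 -> iint k (upd lo m cc) hi f v2 -> iint k lo hi f (v1 + v2).
Proof.
  induction k as [|k IH]; intros lo hi f m cc v1 v2 Hm Hl Hc Hf H1 H2; [lia|].
  assert (Hk := Hl k (Nat.lt_succ_diag_r k)).
  assert (Hl' : forall j, (j < k)%nat -> 0 < lo j <= hi j) by (intros; apply Hl; lia).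
  apply iint_S in H1, H2. apply iint_S.
  destruct H1 as [g1 [Hg1 [e11 [e12 ->]]]]. destruct H2 as [g2 [Hg2 [e21 [e22 ->]]]].
  destruct (Nat.eq_dec m k) as [->|Hmk].
  - (* cut in the last variable: glue [g1] (|x| < cc) and [g2] (|x| > cc) *)
    rewrite !upd_same in *.
    assert (Ex : forall x, exists v, lo k < Rabs x < hi k -> iint k lo hi (fun t => f (upd t k x)) v).
    { intro x. destruct (classic (lo k < Rabs x < hi k)) as [Hx|Hx].
      - destruct (iint_exists k lo hi (fun t => f (upd t k x)) Hl') as [v Hv].
        { apply blip_inner; auto. lra. }
        exists v; auto.
      - exists 0; tauto. }
    set (h := fun x => proj1_sig (constructive_indefinite_description _ (Ex x))).
    assert (Hh : forall x, lo k < Rabs x < hi k -> iint k lo hi (fun t => f (upd t k x)) (h x)).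
    { intro x. unfold h. destruct constructive_indefinite_description; auto. }
    set (g := fun x => if Rlt_dec (Rabs x) cc then g1 x
                       else if Rlt_dec cc (Rabs x) then g2 x else h x).
    assert (P1 := RInt_piece g g1 (- cc) (- lo k) ltac:(lra)
      ltac:(intros x Hx; unfold g; rewrite Rabs_left by lra; destruct Rlt_dec; [auto|lra]) e11).
    assert (P2 := RInt_piece g g1 (lo k) cc ltac:(lra)
      ltac:(intros x Hx; unfold g; rewrite Rabs_right by lra; destruct Rlt_dec; [auto|lra]) e12).
    assert (P3 := RInt_piece g g2 (- hi k) (- cc) ltac:(lra)
      ltac:(intros x Hx; unfold g; rewrite Rabs_left by lra; destruct Rlt_dec; [lra|];
            destruct Rlt_dec; [auto|lra]) e21).
    assert (P4 := RInt_piece g g2 cc (hi k) ltac:(lra)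
      ltac:(intros x Hx; unfold g; rewrite Rabs_right by lra; destruct Rlt_dec; [lra|];
            destruct Rlt_dec; [auto|lra]) e22).
    destruct P1 as [f1 r1], P2 as [f2 r2], P3 as [f3 r3], P4 as [f4 r4].
    exists g; repeat split.
    + intros x Hx. unfold g. destruct Rlt_dec; [|destruct Rlt_dec].
      * eapply iint_ext_bounds; [|apply Hg1; lra]. intros j Hj; rewrite upd_other by lia; auto.
      * eapply iint_ext_bounds; [|apply Hg2; lra]. intros j Hj; rewrite upd_other by lia; auto.
      * apply Hh; auto.
    + eapply ex_RInt_Chasles; [exact f3|exact f1].
    + eapply ex_RInt_Chasles; [exact f2|exact f4].
    + rewrite <- (@RInt_Chasles R_CompleteNormedModule g (- hi k) (- cc) (- lo k)),
        <- (@RInt_Chasles R_CompleteNormedModule g (lo k) cc (hi k)) by auto.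
      rewrite r1, r2, r3, r4. unfold plus; simpl. ring.
  - (* cut in an inner variable: add the inner integrals pointwise *)
    rewrite !upd_other in * by lia.
    exists (fun x => g1 x + g2 x). repeat split.
    + intros x Hx. apply (IH lo hi _ m cc (g1 x) (g2 x)); [lia | auto | auto | | auto | auto].
      apply blip_inner; auto. lra.
    + apply (ex_RInt_plus g1 g2); auto.
    + apply (ex_RInt_plus g1 g2); auto.
    + rewrite (@RInt_plus R_CompleteNormedModule g1 g2 (- hi k)),
        (@RInt_plus R_CompleteNormedModule g1 g2 (lo k)) by auto.
      unfold plus; simpl. ring.
Qed.

Lemma blip_const k lo hi c : blip k lo hi (fun _ => c).
Proof.
  exists 0, (Rabs c). split. lra. intros; split. lra.
  rewrite Rminus_diag, Rabs_R0, Rmult_0_l; lra.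
Qed.

Lemma blip_coord k lo hi j : blip k lo hi (fun t => t j).
Proof.
  destruct (Compare_dec.lt_dec j k) as [Hj|Hj].
  - exists 1, (hi j). split. lra. intros t t' [Ht1 _] [Ht2 _]. split.
    + apply Ht1; auto.
    + rewrite Rmult_1_l. apply (rsum_term k (fun j => Rabs (t j - t' j))); auto.
      intros; apply Rabs_pos.
  - exists 0, 0. split. lra. intros t t' [_ Ht1] [_ Ht2].
    rewrite Ht1, Ht2 by lia. rewrite Rminus_diag, Rabs_R0. split; lra.
Qed.

Lemma blip_plus k lo hi f g : blip k lo hi f -> blip k lo hi g -> blip k lo hi (fun t => f t + g t).
Proof.
  intros [L1 [B1 [HL1 H1]]] [L2 [B2 [HL2 H2]]]. exists (L1 + L2), (B1 + B2). split. lra.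
  intros t t' Ht Ht'. destruct (H1 t t' Ht Ht') as [a1 b1]. destruct (H2 t t' Ht Ht') as [a2 b2].
  split.
  - eapply Rle_trans. apply Rabs_triang. lra.
  - replace (f t + g t - (f t' + g t')) with ((f t - f t') + (g t - g t')) by ring.
    eapply Rle_trans. apply Rabs_triang. lra.
Qed.

Lemma blip_mult k lo hi f g : blip k lo hi f -> blip k lo hi g -> blip k lo hi (fun t => f t * g t).
Proof.
  intros [L1 [B1 [HL1 H1]]] [L2 [B2 [HL2 H2]]].
  assert (0 <= Rabs B1) by apply Rabs_pos. assert (0 <= Rabs B2) by apply Rabs_pos.
  exists (Rabs B1 * L2 + Rabs B2 * L1), (B1 * B2). split; [nra|].
  intros t t' Ht Ht'. destruct (H1 t t' Ht Ht') as [a1 b1]. destruct (H2 t t' Ht Ht') as [a2 b2].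
  destruct (H2 t' t Ht' Ht) as [a2' _].
  assert (Dn := distk_nonneg k t t').
  split.
  - rewrite Rabs_mult. apply Rmult_le_compat; auto using Rabs_pos.
  - replace (f t * g t - f t' * g t') with (f t * (g t - g t') + g t' * (f t - f t')) by ring.
    eapply Rle_trans. apply Rabs_triang. rewrite !Rabs_mult.
    assert (Rabs (f t) * Rabs (g t - g t') <= Rabs B1 * (L2 * distk k t t')).
    { apply Rmult_le_compat; auto using Rabs_pos. eapply Rle_trans; [exact a1|apply RRle_abs]. }
    assert (Rabs (g t') * Rabs (f t - f t') <= Rabs B2 * (L1 * distk k t t')).
    { apply Rmult_le_compat; auto using Rabs_pos. eapply Rle_trans; [exact a2'|apply RRle_abs]. }
    nra.
Qed.

Lemma blip_comp k lo hi (h : R -> R) f Bh : (forall x, Rabs (h x) <= Bh) ->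
  (forall x y, Rabs (h x - h y) <= Rabs (x - y)) -> blip k lo hi f -> blip k lo hi (fun t => h (f t)).
Proof.
  intros Hb Hl [L [B [HL H]]]. exists L, Bh. split; auto. intros t t' Ht Ht'. split; auto.
  eapply Rle_trans. apply Hl. apply H; auto.
Qed.

Lemma blip_inv k lo hi f m : 0 < m -> (forall t, cbox k lo hi t -> m <= Rabs (f t)) ->
  blip k lo hi f -> blip k lo hi (fun t => / f t).
Proof.
  intros Hm Hf [L [B [HL H]]]. exists (L / (m * m)), (/ m). split.
  { apply Rmult_le_pos; auto. left; apply Rinv_0_lt_compat; nra. }
  intros t t' Ht Ht'. assert (m1 := Hf t Ht). assert (m2 := Hf t' Ht').
  assert (n1 : f t <> 0) by (intro E; rewrite E, Rabs_R0 in m1; lra).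
  assert (n2 : f t' <> 0) by (intro E; rewrite E, Rabs_R0 in m2; lra).
  split.
  - rewrite Rabs_inv. apply Rinv_le_contravar; auto.
  - replace (/ f t - / f t') with ((f t' - f t) * (/ f t * / f t')) by (field; auto).
    rewrite Rabs_mult, Rabs_mult, !Rabs_inv, <- Rabs_Ropp, Ropp_minus_distr.
    destruct (H t t' Ht Ht') as [_ b].
    assert (/ Rabs (f t) <= / m) by (apply Rinv_le_contravar; auto).
    assert (/ Rabs (f t') <= / m) by (apply Rinv_le_contravar; auto).
    assert (0 <= / Rabs (f t)) by (left; apply Rinv_0_lt_compat; lra).
    assert (0 <= / Rabs (f t')) by (left; apply Rinv_0_lt_compat; lra).
    assert (Dn := distk_nonneg k t t').
    unfold Rdiv. rewrite Rinv_mult.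
    assert (/ Rabs (f t) * / Rabs (f t') <= / m * / m) by (apply Rmult_le_compat; auto).
    assert (0 <= Rabs (f t - f t')) by apply Rabs_pos.
    apply Rle_trans with (L * distk k t t' * (/ m * / m)).
    { apply Rmult_le_compat; auto. apply Rmult_le_pos; auto. }
    nra.
Qed.

Lemma blip_rsum k lo hi N (h : nat -> (nat -> R) -> R) :
  (forall i, (i < N)%nat -> blip k lo hi (h i)) -> blip k lo hi (fun t => rsum N (fun i => h i t)).
Proof.
  induction N; intros H; simpl. apply blip_const.
  apply (blip_plus k lo hi (fun t => rsum N (fun i => h i t)) (h N)).
  apply IHN; intros; apply H; lia. apply H; lia.
Qed.

Lemma blip_rprod k lo hi N (h : nat -> (nat -> R) -> R) :
  (forall i, (i < N)%nat -> blip k lo hi (h i)) -> blip k lo hi (fun t => rprod N (fun i => h i t)).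
Proof.
  induction N; intros H; simpl. apply blip_const.
  apply (blip_mult k lo hi (fun t => rprod N (fun i => h i t)) (h N)).
  apply IHN; intros; apply H; lia. apply H; lia.
Qed.

Lemma blip_mono k lo hi m : blip k lo hi (mono m).
Proof.
  unfold mono. apply (blip_rprod k lo hi (length m) (fun i t => t i ^ nth i m O)).
  intros i _. induction (nth i m O); simpl. apply blip_const.
  apply (blip_mult k lo hi (fun t => t i)); auto. apply blip_coord.
Qed.

Lemma blip_term k lo hi (b : bool) c m :
  blip k lo hi (fun t => if b then c * mono m t else 0).
Proof.
  destruct b; [|apply blip_const].
  apply (blip_mult k lo hi (fun _ => c) (mono m)); [apply blip_const | apply blip_mono].
Qed.

Lemma blip_phaseP k lo hi d P xi : blip k lo hi (phaseP d P xi).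
Proof.
  unfold phaseP. apply (blip_rsum k lo hi d (fun nu t => xi nu * evalP (P nu) t)).
  intros nu _. apply (blip_mult k lo hi (fun _ => xi nu)); [apply blip_const|].
  induction (P nu) as [|mc p IH]; simpl; [apply blip_const|].
  apply (blip_plus k lo hi (fun t => snd mc * mono (fst mc) t)); auto.
  apply (blip_term k lo hi true).
Qed.

Lemma blip_phasePF k lo hi d P F xi : blip k lo hi (phasePF d P F xi).
Proof.
  unfold phasePF. apply (blip_rsum k lo hi d (fun nu t => xi nu * evalPF (F nu) (P nu) t)).
  intros nu _. apply (blip_mult k lo hi (fun _ => xi nu)); [apply blip_const|].
  induction (P nu) as [|mc p IH]; simpl; [apply blip_const|].
  apply (blip_plus k lo hi (fun t => if excluded_middle_informative (F nu (embed (fst mc)))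
      then snd mc * mono (fst mc) t else 0)); auto.
  destruct excluded_middle_informative; [apply (blip_term k lo hi true) | apply blip_const].
Qed.

Lemma cos_lip x y : Rabs (cos x - cos y) <= Rabs (x - y).
Proof.
  destruct (MVT_abs cos (fun c => - sin c) y x) as [c [Hc _]].
  { intros; apply derivable_pt_lim_cos. }
  rewrite Hc, Rabs_Ropp. rewrite <- (Rmult_1_l (Rabs (x - y))) at 2.
  apply Rmult_le_compat_r. apply Rabs_pos. apply Rabs_le, SIN_bound.
Qed.

Lemma sin_lip x y : Rabs (sin x - sin y) <= Rabs (x - y).
Proof.
  destruct (MVT_abs sin cos y x) as [c [Hc _]].
  { intros; apply derivable_pt_lim_sin. }
  rewrite Hc. rewrite <- (Rmult_1_l (Rabs (x - y))) at 2.
  apply Rmult_le_compat_r. apply Rabs_pos. apply Rabs_le, COS_bound.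
Qed.

Lemma blip_integrand k lo hi (ph : (nat -> R) -> R) (c : R -> R) :
  (forall j, (j < k)%nat -> 0 < lo j) -> blip k lo hi ph -> (c = cos \/ c = sin) ->
  blip k lo hi (fun t => c (ph t) / rprod k t).
Proof.
  intros Hl Hph Hc. unfold Rdiv.
  apply (blip_mult k lo hi (fun t => c (ph t)) (fun t => / rprod k t)).
  - destruct Hc as [-> | ->]; apply (blip_comp k lo hi _ ph 1); auto.
    + intros; apply Rabs_le, COS_bound.
    + apply cos_lip.
    + intros; apply Rabs_le, SIN_bound.
    + apply sin_lip.
  - apply blip_inv with (rprod k lo). apply rprod_pos; auto.
    + intros t [Ht _]. rewrite rprod_abs. apply rprod_le. intros j Hj.
      specialize (Ht j Hj). specialize (Hl j Hj). lra.
    + apply (blip_rprod k lo hi k (fun i t => t i)). intros; apply blip_coord.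
Qed.

Lemma cint_exists n lo hi ph : (forall j, (j < n)%nat -> 0 < lo j <= hi j) ->
  blip n lo hi ph -> exists z, cint n lo hi ph z.
Proof.
  intros Hl Hph.
  assert (Hl0 : forall j, (j < n)%nat -> 0 < lo j) by (intros j Hj; apply Hl; auto).
  destruct (iint_exists n lo hi (fun t => cos (ph t) / rprod n t) Hl) as [v1 H1].
  { apply blip_integrand; auto. }
  destruct (iint_exists n lo hi (fun t => sin (ph t) / rprod n t) Hl) as [v2 H2].
  { apply blip_integrand; auto. }
  exists (v1, v2). split; auto.
Qed.

Definition cadd (z w : R * R) : R * R := (fst z + fst w, snd z + snd w).

Lemma cint_split n lo hi ph m cc z1 z2 : (m < n)%nat ->
  (forall j, (j < n)%nat -> 0 < lo j <= hi j) -> lo m < cc < hi m -> blip n lo hi ph ->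
  cint n lo (upd hi m cc) ph z1 -> cint n (upd lo m cc) hi ph z2 ->
  cint n lo hi ph (cadd z1 z2).
Proof.
  intros Hm Hl Hc Hph [a1 b1] [a2 b2].
  assert (Hl0 : forall j, (j < n)%nat -> 0 < lo j) by (intros j Hj; apply Hl; auto).
  split; simpl; eapply iint_split; eauto; apply blip_integrand; auto.
Qed.

Lemma cint_ext_bounds n lo hi lo' hi' ph z :
  (forall j, (j < n)%nat -> lo j = lo' j /\ hi j = hi' j) ->
  cint n lo hi ph z -> cint n lo' hi' ph z.
Proof. intros H [H1 H2]; split; eapply iint_ext_bounds; eauto. Qed.

Definition norm1 (z : R * R) := Rabs (fst z) + Rabs (snd z).

Lemma cmod_le_norm1 z : cmod z <= norm1 z.
Proof.
  destruct z as [x y]. unfold cmod, norm1; cbn [fst snd].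
  assert (0 <= Rabs x) by apply Rabs_pos. assert (0 <= Rabs y) by apply Rabs_pos.
  rewrite <- (sqrt_pow2 (Rabs x + Rabs y)) by lra.
  apply sqrt_le_1_alt. rewrite <- (pow2_abs x), <- (pow2_abs y). nra.
Qed.

Lemma norm1_le_2cmod z : norm1 z <= 2 * cmod z.
Proof.
  destruct z as [x y]. unfold cmod, norm1; cbn [fst snd].
  assert (Hx : Rabs x <= sqrt (x ^ 2 + y ^ 2)).
  { rewrite <- (sqrt_pow2 (Rabs x)) by apply Rabs_pos.
    apply sqrt_le_1_alt. rewrite pow2_abs. pose proof (pow2_ge_0 y). lra. }
  assert (Hy : Rabs y <= sqrt (x ^ 2 + y ^ 2)).
  { rewrite <- (sqrt_pow2 (Rabs y)) by apply Rabs_pos.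
    apply sqrt_le_1_alt. rewrite pow2_abs. pose proof (pow2_ge_0 x). lra. }
  lra.
Qed.

Lemma norm1_triang z w : norm1 z <= norm1 w + norm1 (fst z - fst w, snd z - snd w).
Proof.
  unfold norm1; cbn [fst snd].
  pose proof (Rabs_triang (fst w) (fst z - fst w)).
  pose proof (Rabs_triang (snd w) (snd z - snd w)).
  replace (fst w + (fst z - fst w)) with (fst z) in * by ring.
  replace (snd w + (snd z - snd w)) with (snd z) in * by ring. lra.
Qed.

Lemma cmod_le_of_close W Z K :
  norm1 W <= K -> norm1 (fst W - fst Z, snd W - snd Z) <= 1 -> cmod Z <= K + 1.
Proof.
  intros HW HWZ. pose proof (cmod_le_norm1 Z). pose proof (norm1_triang Z W).
  unfold norm1 in *; cbn [fst snd] in *.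
  rewrite (Rabs_minus_sym (fst Z)), (Rabs_minus_sym (snd Z)) in *. lra.
Qed.

(* Cutting coordinate [m] at [A_m]
   writes the integral over [lower_mix A m eps < |t| < hi] as the difference of
   two such integrals with [m+1] coordinates taken from [A]; for [m = 0] the
   integral is within 1 of a limit [I(P, xi, hi)] once [eps] is small.  By
   induction, the integrals with [m] mixed coordinates are bounded by
   [2^m (2M + 2)], and [m = n] gives the box. *)
Definition lower_mix (A : nat -> R) m (eps : nat -> R) : nat -> R :=
  fun j => if Nat.ltb j m then A j else eps j.

Lemma norm1_near_limit z L M : cdist z L < 1 -> cmod L <= M -> norm1 z <= 2 * M + 2.
Proof.
  intros Hd HL. unfold cdist in Hd.
  pose proof (norm1_triang z L). pose proof (norm1_le_2cmod L).
  pose proof (norm1_le_2cmod (fst z - fst L, snd z - snd L)). lra.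
Qed.

Lemma norm1_cadd_r z1 z : norm1 z <= norm1 (cadd z1 z) + norm1 z1.
Proof.
  pose proof (norm1_triang z (cadd z1 z)). unfold norm1, cadd in *; cbn [fst snd] in *.
  replace (fst z - (fst z1 + fst z)) with (- fst z1) in * by ring.
  replace (snd z - (snd z1 + snd z)) with (- snd z1) in * by ring.
  rewrite !Rabs_Ropp in *. lra.
Qed.

Section BoxBound.
Variables (n : nat) (T : nat -> Prop) (ph : (nat -> R) -> R) (M : R) (A : nat -> R).
Hypothesis Hph : forall lo hi, blip n lo hi ph.
Hypothesis HI : forall hi, inI n T hi -> exists L, Ilim n ph hi L /\ cmod L <= M.
Hypothesis HA : inI n T A.

Lemma partial_box_bound m : (m <= n)%nat -> forall hi, inI n T hi ->
  (forall j, (j < n)%nat -> A j <= hi j) -> (forall j, (j < m)%nat -> A j < hi j) ->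
  exists eta, 0 < eta /\
  forall eps, (forall j, (j < n)%nat -> 0 < eps j < eta /\ eps j < A j) ->
  forall z, cint n (lower_mix A m eps) hi ph z -> norm1 z <= 2 ^ m * (2 * M + 2).
Proof.
  induction m as [|m IH]; intros Hm hi Hhi HAh HAs.
  - destruct (HI hi Hhi) as [L [HL HLM]].
    destruct (HL 1 ltac:(lra)) as [eta [Heta Heps]].
    exists eta; split; auto. intros eps Heps0 z Hz.
    replace (lower_mix A 0 eps) with eps in Hz by (apply functional_extensionality; auto).
    destruct (Heps eps) as [_ Hd]; [intros j Hj; apply Heps0; auto|].
    simpl. rewrite Rmult_1_l. apply (norm1_near_limit z L M); auto.
  - assert (Hmn : (m < n)%nat) by lia.
    set (hi1 := upd hi m (A m)).
    destruct (IH ltac:(lia) hi1) as [eta1 [He1 H1]].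
    { intros j Hj. unfold hi1, upd. destruct (Nat.eqb_spec j m); [subst|]; auto. }
    { intros j Hj. unfold hi1, upd. destruct (Nat.eqb_spec j m); [subst; lra|auto]. }
    { intros j Hj. unfold hi1. rewrite upd_other by lia. apply HAs; lia. }
    destruct (IH ltac:(lia) hi Hhi HAh) as [eta2 [He2 H2]]; [intros j Hj; apply HAs; lia|].
    exists (Rmin eta1 eta2). split; [apply Rmin_pos; auto|].
    intros eps Heps z Hz.
    pose proof (Rmin_l eta1 eta2). pose proof (Rmin_r eta1 eta2).
    set (lo := lower_mix A m eps).
    assert (Hlo : forall j, (j < n)%nat -> 0 < lo j <= hi j).
    { intros j Hj. unfold lo, lower_mix. pose proof (HAh j Hj). destruct (Nat.ltb_spec j m).
      - pose proof (proj1 (HA j Hj)). lra.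
      - destruct (Heps j Hj) as [[? ?] ?]. lra. }
    assert (Hc : lo m < A m < hi m).
    { unfold lo, lower_mix. destruct (Nat.ltb_spec m m); [lia|].
      destruct (Heps m Hmn) as [_ ?]. split; [lra | apply HAs; lia]. }
    destruct (cint_exists n lo hi1 ph) as [z1 Hz1]; auto.
    { intros j Hj. unfold hi1, upd. destruct (Nat.eqb_spec j m).
      - subst. pose proof (Hlo m Hmn). lra.
      - apply Hlo; auto. }
    replace (lower_mix A (S m) eps) with (upd lo m (A m)) in Hz.
    2:{ apply functional_extensionality; intro j. unfold lo, lower_mix, upd.
        destruct (Nat.eqb_spec j m), (Nat.ltb_spec j (S m)), (Nat.ltb_spec j m);
          subst; auto; lia. }
    assert (Hsum := cint_split n lo hi ph m (A m) z1 z Hmn Hlo Hc (Hph _ _) Hz1 Hz).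
    assert (Hb1 := H1 eps ltac:(intros j Hj; destruct (Heps j Hj) as [[? ?] ?]; repeat split; lra) _ Hz1).
    assert (Hb2 := H2 eps ltac:(intros j Hj; destruct (Heps j Hj) as [[? ?] ?]; repeat split; lra) _ Hsum).
    pose proof (norm1_cadd_r z1 z). simpl. lra.
Qed.

Lemma box_bound B : inI n T B -> (forall j, (j < n)%nat -> A j < B j) ->
  forall W, cint n A B ph W -> norm1 W <= 2 ^ n * (2 * M + 2).
Proof.
  intros HB HAB W HW.
  destruct (partial_box_bound n (le_n n) B HB) as [eta [Heta Hq]]; auto.
  { intros j Hj; left; auto. }
  set (eps := fun j => Rmin eta (A j) / 2).
  apply (Hq eps).
  - intros j Hj. pose proof (proj1 (HA j Hj)). unfold eps.
    pose proof (Rmin_l eta (A j)). pose proof (Rmin_r eta (A j)).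
    assert (0 < Rmin eta (A j)) by (apply Rmin_pos; auto). repeat split; lra.
  - eapply cint_ext_bounds; [|exact HW]. intros j Hj. split; auto.
    unfold lower_mix. destruct (Nat.ltb_spec j n); [auto|lia].
Qed.

End BoxBound.

Definition eventually0 (Pr : R -> Prop) : Prop :=
  exists d0, 0 < d0 /\ forall dl, 0 < dl < d0 -> Pr dl.

Lemma eventually0_always (Pr : R -> Prop) : (forall dl, 0 < dl -> Pr dl) -> eventually0 Pr.
Proof. intros H. exists 1. split; [lra | intros dl Hdl; apply H; lra]. Qed.

Lemma eventually0_and (P1 P2 : R -> Prop) :
  eventually0 P1 -> eventually0 P2 -> eventually0 (fun dl => P1 dl /\ P2 dl).
Proof.
  intros [d1 [Hd1 H1]] [d2 [Hd2 H2]]. exists (Rmin d1 d2). split; [apply Rmin_pos; auto|].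
  intros dl Hdl. pose proof (Rmin_l d1 d2). pose proof (Rmin_r d1 d2).
  split; [apply H1 | apply H2]; lra.
Qed.

Lemma eventually0_forall_lt N (Pr : nat -> R -> Prop) :
  (forall j, (j < N)%nat -> eventually0 (Pr j)) ->
  eventually0 (fun dl => forall j, (j < N)%nat -> Pr j dl).
Proof.
  induction N; intros H.
  - apply eventually0_always. intros; lia.
  - destruct (eventually0_and _ _ (IHN ltac:(intros; apply H; lia)) (H N ltac:(lia)))
      as [d0 [Hd0 H0]].
    exists d0. split; auto. intros dl Hdl j Hj. destruct (H0 dl Hdl) as [Hlt HN].
    destruct (Nat.eq_dec j N) as [->|]; auto. apply Hlt; lia.
Qed.

Lemma eventually0_witness (Pr : R -> Prop) : eventually0 Pr -> exists dl, 0 < dl /\ Pr dl.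
Proof.
  intros [d0 [Hd0 H]]. exists (d0 / 2). split; [lra | apply H; lra].
Qed.

Lemma eventually0_rpower_small e T : 0 < e -> 0 < T -> eventually0 (fun dl => Rpower dl e < T).
Proof.
  intros He HT. exists (exp (ln T / e)). split; [apply exp_pos|].
  intros dl [H1 H2]. unfold Rpower. rewrite <- (exp_ln T) by auto.
  apply exp_increasing. apply ln_increasing in H2; auto. rewrite ln_exp in H2.
  apply Rmult_lt_compat_l with (r := e) in H2; auto.
  replace (e * (ln T / e)) with (ln T) in H2 by (field; lra). lra.
Qed.

Lemma mono_scale n dl u m s : 0 < dl -> length m = n ->
  mono m (cmul (fun j => Rpower dl (u j)) s) = Rpower dl (ip n u (embed m)) * mono m s.
Proof.
  intros Hd Hl. unfold mono, cmul, ip. rewrite Hl.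
  rewrite (rprod_ext n _ (fun j => Rpower dl (u j) ^ nth j m O * s j ^ nth j m O))
    by (intros; apply Rpow_mult_distr).
  rewrite rprod_mult. f_equal. clear Hl. induction n; simpl.
  - rewrite Rpower_O; auto.
  - rewrite IHn, Rpower_plus, <- Rpower_pow, Rpower_mult by apply exp_pos. reflexivity.
Qed.

Lemma mono_bound m s b : (forall j, (j < length m)%nat -> Rabs (s j) <= b j) ->
  Rabs (mono m s) <= mono m b.
Proof.
  intros H. unfold mono. rewrite rprod_abs. apply rprod_le. intros j Hj.
  rewrite <- RPow_abs. split. apply pow_le, Rabs_pos. apply pow_incr. split. apply Rabs_pos. auto.
Qed.

Definition level_split n (u : nat -> R) (G : (nat -> R) -> Prop) r (m : list nat) : Prop :=
  length m = n /\ (G (embed m) -> ip n u (embed m) = r) /\ (~ G (embed m) -> ip n u (embed m) > r).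

Lemma monomial_scaling n u b G r m cf eps : level_split n u G r m -> 0 < eps ->
  eventually0 (fun dl => forall s, (forall j, (j < n)%nat -> Rabs (s j) <= b j) ->
    Rabs (Rpower dl (- r) * (cf * mono m (cmul (fun j => Rpower dl (u j)) s)) -
          (if excluded_middle_informative (G (embed m)) then cf * mono m s else 0)) <= eps).
Proof.
  intros [Hlen [Hin Hout]] Heps.
  destruct excluded_middle_informative as [g|g].
  - apply eventually0_always. intros dl Hdl s _.
    rewrite (mono_scale n), (Hin g) by (auto; lra).
    replace (Rpower dl (- r) * (cf * (Rpower dl r * mono m s)))
      with (cf * mono m s * (Rpower dl (- r) * Rpower dl r)) by ring.
    rewrite <- Rpower_plus, Rplus_opp_l, Rpower_O, Rmult_1_r, Rminus_diag, Rabs_R0 by lra. lra.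
  - set (e := ip n u (embed m) - r).
    assert (He : 0 < e) by (specialize (Hout g); unfold e; lra).
    set (Bm := Rabs cf * Rabs (mono m b) + 1).
    assert (HB : 0 < Bm) by (unfold Bm; pose proof (Rabs_pos cf); pose proof (Rabs_pos (mono m b)); nra).
    destruct (eventually0_rpower_small e (eps / Bm)) as [d0 [Hd0 H0]]; auto.
    { apply Rdiv_lt_0_compat; lra. }
    exists d0. split; auto. intros dl Hdl s Hs.
    rewrite (mono_scale n) by (auto; lra).
    replace (Rpower dl (- r) * (cf * (Rpower dl (ip n u (embed m)) * mono m s)) - 0)
      with (cf * mono m s * Rpower dl e)
      by (unfold e; unfold Rminus at 1; rewrite Rplus_comm, Rpower_plus; ring).
    assert (Hp : 0 < Rpower dl e) by apply exp_pos.
    assert (Hms : Rabs (mono m s) <= Rabs (mono m b)).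
    { eapply Rle_trans; [apply mono_bound | apply RRle_abs].
      intros j Hj. apply Hs. rewrite <- Hlen; auto. }
    rewrite !Rabs_mult, (Rabs_right (Rpower _ _)) by lra.
    pose proof (Rabs_pos cf). pose proof (Rabs_pos (mono m s)).
    assert (Rabs cf * Rabs (mono m s) <= Bm) by (unfold Bm; nra).
    replace eps with (Bm * (eps / Bm)) by (field; lra).
    apply Rmult_le_compat; try nra. specialize (H0 dl Hdl). lra.
Qed.

Lemma poly_scaling n u b G r p eps : List.Forall (fun mc => level_split n u G r (fst mc)) p -> 0 < eps ->
  eventually0 (fun dl => forall s, (forall j, (j < n)%nat -> Rabs (s j) <= b j) ->
    Rabs (Rpower dl (- r) * evalP p (cmul (fun j => Rpower dl (u j)) s) - evalPF G p s) <= eps).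
Proof.
  intros HF. revert eps. induction HF as [|mc p Hmc HF IH]; intros eps Heps.
  - apply eventually0_always. intros; simpl. rewrite Rmult_0_r, Rminus_0_r, Rabs_R0. lra.
  - assert (Heps2 : 0 < eps / 2) by lra.
    destruct (eventually0_and _ _ (IH _ Heps2)
      (monomial_scaling n u b G r (fst mc) (snd mc) _ Hmc Heps2)) as [d0 [Hd0 H0]].
    exists d0. split; auto. intros dl Hdl s Hs. destruct (H0 dl Hdl) as [H1 H2].
    specialize (H1 s Hs). specialize (H2 s Hs). simpl.
    match goal with |- Rabs (?x * (?y + ?z) - (?w + ?v)) <= _ =>
      replace (x * (y + z) - (w + v)) with ((x * y - w) + (x * z - v)) by ring end.
    eapply Rle_trans; [apply Rabs_triang | lra].
Qed.

Definition face_level n (PP G : (nat -> R) -> Prop) (u : nat -> R) (r : R) : Prop :=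
  (forall x, G x -> ip n u x = r) /\ (forall y, PP y -> ~ G y -> ip n u y > r).

Lemma face_levels n d S Nw (F : nat -> (nat -> R) -> Prop) u :
  (forall nu, (nu < d)%nat -> dual_int n S (Nw nu) (F nu) u) ->
  exists rr : nat -> R, forall nu, (nu < d)%nat -> (exists x, F nu x) ->
    face_level n (Nw nu) (F nu) u (rr nu).
Proof.
  intros Hu.
  assert (Hr : forall nu, exists r, (nu < d)%nat -> (exists x, F nu x) ->
    face_level n (Nw nu) (F nu) u r).
  { intro nu. destruct (classic ((nu < d)%nat /\ exists x, F nu x)) as [[H1 H2]|H].
    - destruct (proj1 (proj2 (Hu nu H1)) H2) as [r Hr]. exists r; auto.
    - exists 0. intros; exfalso; auto. }
  exists (fun nu => proj1_sig (constructive_indefinite_description _ (Hr nu))).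
  intro nu. destruct constructive_indefinite_description; auto.
Qed.

Lemma Newton_supp (Om : list (list nat)) S m : In m Om -> Newton Om S (embed m).
Proof.
  intros Hm. exists (embed m :: nil), (1 :: nil). repeat split.
  - constructor; [|constructor]. exists m, (fun _ => 0). repeat split; auto; intros; lra.
  - constructor; [lra|constructor].
  - simpl; ring.
  - intro j; simpl; ring.
Qed.

Lemma evalPF_empty (G : (nat -> R) -> Prop) p s : (forall x, ~ G x) -> evalPF G p s = 0.
Proof.
  intros H. induction p; simpl; auto. destruct excluded_middle_informative as [g|].
  exfalso; eapply H; eauto. rewrite IHp; ring.
Qed.

(* Frequencies compensating the scaling: [xi_nu dl^{-r_nu}] for nonempty faces. *)
Definition scaled_freq (F : nat -> (nat -> R) -> Prop) (rr xi : nat -> R) (dl : R) (nu : nat) : R :=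
  if excluded_middle_informative (exists x, F nu x) then xi nu * Rpower dl (- rr nu) else 0.

Section PhaseScaling.
Variables (n d : nat) (P : nat -> mpoly) (S : nat -> Prop) (F : nat -> (nat -> R) -> Prop).
Variables (u rr xi b : nat -> R).
Hypothesis HP : forall nu, (nu < d)%nat -> WFpoly n (P nu).
Hypothesis Hrr : forall nu, (nu < d)%nat -> (exists x, F nu x) ->
  face_level n (Newton (supp (P nu)) S) (F nu) u (rr nu).

Lemma component_scaling nu eps : (nu < d)%nat -> 0 < eps ->
  eventually0 (fun dl => forall s, (forall j, (j < n)%nat -> Rabs (s j) <= b j) ->
    Rabs (scaled_freq F rr xi dl nu * evalP (P nu) (cmul (fun j => Rpower dl (u j)) s)
          - xi nu * evalPF (F nu) (P nu) s) <= eps).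
Proof.
  intros Hnu Heps. unfold scaled_freq. destruct excluded_middle_informative as [Hne|He].
  - destruct (Hrr nu Hnu Hne) as [Hin Hout].
    set (X := Rabs (xi nu)). assert (HX : 0 <= X) by apply Rabs_pos.
    destruct (poly_scaling n u b (F nu) (rr nu) (P nu) (eps / (X + 1))) as [d0 [Hd0 H0]].
    { destruct (HP nu Hnu) as [_ [_ HFa]].
      rewrite List.Forall_forall in HFa |- *. intros mc Hmc.
      split; [apply HFa; auto | split; auto].
      intros; apply Hout; auto. apply Newton_supp, in_map; auto. }
    { apply Rdiv_lt_0_compat; lra. }
    exists d0. split; auto. intros dl Hdl s Hs. specialize (H0 dl Hdl s Hs).
    match goal with |- Rabs ?e <= _ =>
      replace e with (xi nu * (Rpower dl (- rr nu) * evalP (P nu) (cmul (fun j => Rpower dl (u j)) s)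
                               - evalPF (F nu) (P nu) s)) by ring end.
    rewrite Rabs_mult. fold X.
    apply Rle_trans with (X * (eps / (X + 1))); [apply Rmult_le_compat_l; auto|].
    replace (X * (eps / (X + 1))) with (eps - eps / (X + 1)) by (field; lra).
    assert (0 < eps / (X + 1)) by (apply Rdiv_lt_0_compat; lra). lra.
  - apply eventually0_always. intros dl _ s Hs.
    rewrite evalPF_empty by (intros x Hx; apply He; eauto).
    rewrite Rmult_0_l, Rmult_0_r, Rminus_0_r, Rabs_R0. lra.
Qed.

Lemma phase_scaling eps : 0 < eps ->
  eventually0 (fun dl => forall s, (forall j, (j < n)%nat -> Rabs (s j) <= b j) ->
    Rabs (phaseP d P (scaled_freq F rr xi dl) (cmul (fun j => Rpower dl (u j)) s)
          - phasePF d P F xi s) <= eps).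
Proof.
  intros Heps. pose proof (pos_INR d).
  set (epsd := eps / (INR d + 1)).
  assert (Hepsd : 0 < epsd) by (apply Rdiv_lt_0_compat; lra).
  destruct (eventually0_forall_lt d _ (fun nu Hnu => component_scaling nu epsd Hnu Hepsd))
    as [d0 [Hd0 H0]].
  exists d0. split; auto. intros dl Hdl s Hs. unfold phaseP, phasePF.
  rewrite <- rsum_minus. eapply Rle_trans; [apply rsum_abs|].
  apply Rle_trans with (rsum d (fun _ => epsd)).
  { apply rsum_le. intros nu Hnu. apply H0; auto. }
  rewrite rsum_const.
  replace eps with ((INR d + 1) * epsd) by (unfold epsd; field; lra). nra.
Qed.

End PhaseScaling.

(* For small [dl], both corners [dl^u a], [dl^u b] of the rescaled box lie in
   [I(S)]: on [S0] the weight vanishes and [b_j < 1]; on [S \ S0] the weight is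
   positive, so [dl^{u_j} b_j] is small. *)
Lemma rescaled_corner n S S0 u b : inI n S0 b ->
  (forall j, (j < n)%nat -> S0 j -> u j = 0) ->
  (forall j, (j < n)%nat -> S j -> ~ S0 j -> u j > 0) ->
  eventually0 (fun dl => inI n S (cmul (fun j => Rpower dl (u j)) b)).
Proof.
  intros Hb Hu0 Hu1. apply eventually0_forall_lt. intros j Hj.
  destruct (Hb j Hj) as [Hbj Hbj1]. unfold cmul.
  assert (Hpos : forall dl, 0 < Rpower dl (u j) * b j)
    by (intro dl; apply Rmult_lt_0_compat; [apply exp_pos | auto]).
  destruct (classic (S j /\ ~ S0 j)) as [[Sj nS0j]|HS].
  - destruct (eventually0_rpower_small (u j) (/ b j)) as [d0 [Hd0 H0]];
      [apply Hu1; auto | apply Rinv_0_lt_compat; auto|].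
    exists d0. split; auto. intros dl Hdl. split; auto. intros _.
    replace 1 with (/ b j * b j) by (field; lra).
    apply Rmult_lt_compat_r; auto.
  - apply eventually0_always. intros dl Hdl. split; auto. intros Sj.
    assert (S0j : S0 j) by (apply NNPP; intro; apply HS; auto).
    rewrite Hu0, Rpower_O, Rmult_1_l by (auto; lra). auto.
Qed.

(* Comparison of an integral over the rescaled box [c a < |t| < c b] with an
   integral over [a < |s| < b]: after the change of variables [t = c s] the
   measures [dt/t] and [ds/s] agree, so only the phases are compared. *)
Lemma iint_rescaled_close n a b c ph ph' eps (h : R -> R) v w :
  (forall j, (j < n)%nat -> 0 < c j) -> (forall j, (j < n)%nat -> 0 < a j <= b j) ->
  (forall p q, Rabs (h p - h q) <= Rabs (p - q)) ->
  (forall s, inbox n a b s -> Rabs (ph (cmul c s) - ph' s) <= eps) ->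
  iint n (cmul c a) (cmul c b) (fun t => h (ph t) / rprod n t) v ->
  iint n a b (fun s => h (ph' s) / rprod n s) w ->
  Rabs (v - w) <= eps / rprod n a * vol n a b.
Proof.
  intros Hc Hab Hh Hclose Hv Hw.
  assert (Pc : 0 < rprod n c) by (apply rprod_pos; auto).
  assert (Pa : 0 < rprod n a) by (apply rprod_pos; intros j Hj; apply Hab; auto).
  pose proof (iint_scale n c a b _ v 1 Hc Hv) as Hv'. rewrite !Rmult_1_l in Hv'.
  eapply (iint_approx n a b); [| | exact Hv' | exact Hw].
  { intros j Hj; pose proof (Hab j Hj); lra. }
  intros s Hsb. pose proof (proj1 Hsb) as Hs. cbv beta.
  assert (Ps : rprod n a <= Rabs (rprod n s)).
  { rewrite rprod_abs. apply rprod_le. intros j Hj.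
    pose proof (Hs j Hj). pose proof (Hab j Hj). lra. }
  assert (Ps0 : rprod n s <> 0) by (intro E; rewrite E, Rabs_R0 in Ps; lra).
  assert (E : rprod n (cmul c s) = rprod n c * rprod n s) by (unfold cmul; apply rprod_mult).
  rewrite E. unfold Rdiv.
  replace (rprod n c * (h (ph (cmul c s)) * / (rprod n c * rprod n s)) - h (ph' s) * / rprod n s)
    with ((h (ph (cmul c s)) - h (ph' s)) * / rprod n s) by (field; split; lra).
  rewrite Rabs_mult, Rabs_inv.
  assert (0 < / Rabs (rprod n s)) by (apply Rinv_0_lt_compat; lra).
  apply Rmult_le_compat; [apply Rabs_pos | lra | |].
  - eapply Rle_trans; [apply Hh | apply Hclose, Hsb].
  - apply Rinv_le_contravar; auto.
Qed.

Lemma cint_rescaled_close n a b c ph ph' eps W Z :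
  (forall j, (j < n)%nat -> 0 < c j) -> (forall j, (j < n)%nat -> 0 < a j <= b j) ->
  (forall s, inbox n a b s -> Rabs (ph (cmul c s) - ph' s) <= eps) ->
  cint n (cmul c a) (cmul c b) ph W -> cint n a b ph' Z ->
  norm1 (fst W - fst Z, snd W - snd Z) <= 2 * (eps / rprod n a * vol n a b).
Proof.
  intros Hc Hab Hclose [W1 W2] [Z1 Z2]. unfold norm1; cbn [fst snd].
  pose proof (iint_rescaled_close n a b c ph ph' eps cos _ _ Hc Hab cos_lip Hclose W1 Z1).
  pose proof (iint_rescaled_close n a b c ph ph' eps sin _ _ Hc Hab sin_lip Hclose W2 Z2).
  lra.
Qed.

(* The tolerance on the phases that makes the two integrals 1-close. *)
Definition tolerance n (a b : nat -> R) : R := rprod n a / (2 * vol n a b + 2).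

Lemma tolerance_pos n a b : (forall j, (j < n)%nat -> 0 < a j <= b j) -> 0 < tolerance n a b.
Proof.
  intros Hab. apply Rdiv_lt_0_compat.
  - apply rprod_pos; intros j Hj; apply Hab; auto.
  - pose proof (vol_nonneg n a b ltac:(intros j Hj; pose proof (Hab j Hj); lra)). lra.
Qed.

Lemma cmod_bound_by_rescaling n a b c ph ph' K Z :
  (forall j, (j < n)%nat -> 0 < c j) -> (forall j, (j < n)%nat -> 0 < a j <= b j) ->
  blip n (cmul c a) (cmul c b) ph ->
  (forall s, (forall j, (j < n)%nat -> Rabs (s j) <= b j) ->
     Rabs (ph (cmul c s) - ph' s) <= tolerance n a b) ->
  (forall W, cint n (cmul c a) (cmul c b) ph W -> norm1 W <= K) ->
  cint n a b ph' Z -> cmod Z <= K + 1.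
Proof.
  intros Hc Hab Hph Hclose HK HZ.
  destruct (cint_exists n (cmul c a) (cmul c b) ph) as [W HW]; auto.
  { intros j Hj. unfold cmul. pose proof (Hc j Hj). pose proof (Hab j Hj). split; nra. }
  apply (cmod_le_of_close W Z); auto.
  eapply Rle_trans.
  { apply (cint_rescaled_close n a b c ph ph' (tolerance n a b) W Z); auto.
    intros s [Hs _]. apply Hclose. intros j Hj. pose proof (Hs j Hj). lra. }
  assert (Hpa : 0 < rprod n a) by (apply rprod_pos; intros j Hj; apply Hab; auto).
  pose proof (vol_nonneg n a b ltac:(intros j Hj; pose proof (Hab j Hj); lra)).
  unfold tolerance.
  replace (2 * (rprod n a / (2 * vol n a b + 2) / rprod n a * vol n a b))
    with (1 - 1 / (vol n a b + 1)) by (field; lra).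
  assert (0 < 1 / (vol n a b + 1)) by (apply Rdiv_lt_0_compat; lra). lra.
Qed.

Theorem mainTheorem17
  (n d : nat) (P : nat -> mpoly)
  (S S0 : nat -> Prop) (F : nat -> (nat -> R) -> Prop) (u : nat -> R)
  (HP : forall nu, (nu < d)%nat -> WFpoly n (P nu))
  (HS : forall j, S j -> (j < n)%nat)
  (HS0 : forall j, S0 j -> S j)
  (HF : forall nu, (nu < d)%nat -> is_face n (Newton (supp (P nu)) S) (F nu))
  (Hsup : exists M, forall (r xi : nat -> R), inI n S r ->
            exists L, Ilim n (phaseP d P xi) r L /\ cmod L <= M)
  (Hu : forall nu, (nu < d)%nat -> dual_int n S (Newton (supp (P nu)) S) (F nu) u)
  (Hu0 : forall j, (j < n)%nat -> S0 j -> u j = 0)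
  (Hu1 : forall j, (j < n)%nat -> S j -> ~ S0 j -> u j > 0) :
  exists M, forall (xi a b : nat -> R),
    inI n S0 a -> inI n S0 b -> (forall j, (j < n)%nat -> a j < b j) ->
    (exists z, cint n a b (phasePF d P F xi) z) /\
    (forall z, cint n a b (phasePF d P F xi) z -> cmod z <= M).
Proof.
  destruct Hsup as [M HM].
  exists (2 ^ n * (2 * M + 2) + 1).
  intros xi a b Ha Hb Hab.
  assert (Hab0 : forall j, (j < n)%nat -> 0 < a j <= b j)
    by (intros j Hj; split; [apply Ha | left; apply Hab]; auto).
  split; [apply cint_exists; auto; apply blip_phasePF|].
  intros Z HZ.
  destruct (face_levels n d S (fun nu => Newton (supp (P nu)) S) F u Hu) as [rr Hrr].
  (* a scale [dl] with rescaled corners in [I(S)] and rescaled phase close to [P_F] *)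
  destruct (eventually0_witness _ (eventually0_and _ _
      (eventually0_and _ _ (rescaled_corner n S S0 u a Ha Hu0 Hu1)
                           (rescaled_corner n S S0 u b Hb Hu0 Hu1))
      (phase_scaling n d P S F u rr xi b HP Hrr _ (tolerance_pos n a b Hab0))))
    as [dl [_ [[HA HB] Hclose]]].
  apply (cmod_bound_by_rescaling n a b (fun j => Rpower dl (u j))
           (phaseP d P (scaled_freq F rr xi dl)) (phasePF d P F xi)); auto.
  - intros; apply exp_pos.
  - apply blip_phaseP.
  - intros W HW. apply (box_bound n S _ M _ (fun _ _ => blip_phaseP _ _ _ _ _ _)
      (fun r Hr => HM r (scaled_freq F rr xi dl) Hr) HA _ HB); auto.
    intros j Hj. apply Rmult_lt_compat_l; [apply exp_pos | auto].
Qed.
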